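(* In the setting described in the context, for every $a>0$ the measure $\widetilde{\mu}=h^a_\sharp\mu$ is invariant and satisfies $P_\sharp\widetilde{\mu}_A=P_\sharp\mu_A$; that is, all measures $h^a_\sharp\mu$, $a>0$, yield the same normalized measure $\nu=P_\sharp\mu_A$.
   Context: Let $(\mathcal{X},\Sigma)$ be a measurable space, $\Phi^t$ ($t\in\mathbb{R}$) a flow on $\mathcal{X}$ (bijective measurable maps with $\Phi^{t_1}\circ\Phi^{t_2}=\Phi^{t_1+t_2}$, jointly measurable in $(x,t)$), $f_\sharp$ push-forward, and $\mu$ a probability measure with $\Phi^t_\sharp\mu=\mu$ for all $t$. Let $h^a$, $a>0$, be bijective measurable maps of $\mathcal{X}$ with $h^{a_1}\circ h^{a_2}=h^{a_1a_2}$ and $\Phi^t\circ h^a=h^a\circ\Phi^{t/a}$. A set $\mathcal{Y}\subset\mathcal{X}$ is a representative set if for every $x$ there is a unique $a=A(x)>0$ with $h^a(x)\in\mathcal{Y}$, with $A:\mathcal{X}\to(0,\infty)$ measurable and $\int A\,d\mu<\infty$; the projector is $P(x)=h^{A(x)}(x)$. For a measure $\rho$ and positive measurable $B$ with $0<\int B\,d\rho<\infty$, $\rho_B$ is the probability measure with $d\rho_B/d\rho=B/\int B\,d\rho$. *)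

From HB Require Import structures.
From mathcomp Require Import all_boot all_order all_algebra.
From mathcomp Require Import all_classical all_reals all_analysis.
Set Implicit Arguments. Unset Strict Implicit. Unset Printing Implicit Defensive.
Import Order.TTheory GRing.Theory Num.Theory.
Local Open Scope classical_set_scope.
Local Open Scope ring_scope.

(* Push-forward measure f_# m, for a measurable map f (the proof of
   measurability is an argument so that the measure structure is inferred). *)
Section pushm.
Context d d' (T1 : measurableType d) (T2 : measurableType d') (R : realType).
Variables (m : {measure set T1 -> \bar R}) (f : T1 -> T2).
Variable (mf : measurable_fun [set: T1] f).
Definition pushm : {measure set T2 -> \bar R} :=
  measure_function_pushforward__canonical__measure_function_Measure m mf.
End pushm.

(* rho_B : the probability measure with density B / \int B d rho w.r.t. rho *)
Definition normw d (T : measurableType d) (R : realType)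
  (rho : {measure set T -> \bar R}) (B : T -> R) : set T -> \bar R :=
  fun S => ((\int[rho]_(x in S) (B x)%:E) *
            ((fine (\int[rho]_x (B x)%:E))^-1)%:E)%E.

Definition projector (T : Type) (R : Type) (h : R -> T -> T) (A : T -> R)
  (x : T) : T := h (A x) x.

From HB Require Import structures.
From mathcomp Require Import all_boot all_order all_algebra.
From mathcomp Require Import all_classical all_reals all_analysis measurable_realfun.
Import Order.TTheory GRing.Theory Num.Theory.
Local Open Scope classical_set_scope.
Local Open Scope ring_scope.

(* Uniqueness of the representative gives A (h^a x) = A x / a.  Hence the
   projector is h^a-invariant, and integrating A against h^a_# mu amounts to
   integrating A / a against mu: the factor 1 / a cancels in the normalisation
   defining the measures rho_A.  Invariance of h^a_# mu under the flow follows
   from Phi^t o h^a = h^a o Phi^(t/a). *)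

Lemma measurable_preimageT d d' (T : measurableType d) (U : measurableType d')
    (f : T -> U) (S : set U) :
  measurable_fun [set: T] f -> measurable S -> measurable (f @^-1` S).
Proof. by move=> mf mS; rewrite -[_ @^-1` _]setTI; exact: mf. Qed.

Section representative_set.
Context {X : Type} {R : numFieldType} {h : R -> X -> X} {Y : set X} {A : X -> R}.
Hypothesis h_mul : forall a1 a2, 0 < a1 -> 0 < a2 -> h a1 \o h a2 = h (a1 * a2).
Hypothesis A_pos : forall x, 0 < A x.
Hypothesis A_Y : forall x, Y (h (A x) x).
Hypothesis A_uniq : forall x a, 0 < a -> Y (h a x) -> a = A x.

Lemma A_h {a} : 0 < a -> forall x, A (h a x) = a^-1 * A x.
Proof.
move=> a_gt0 x; have Aha_gt0 := A_pos (h a x).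
have hY : Y (h (A (h a x) * a) x).
  by rewrite -(h_mul _ _ Aha_gt0 a_gt0); exact: A_Y.
rewrite -(A_uniq _ _ (mulr_gt0 Aha_gt0 a_gt0) hY).
by rewrite mulrCA mulVf ?mulr1 ?lt0r_neq0.
Qed.

Lemma projector_comp_h {a} : 0 < a -> projector h A \o h a = projector h A.
Proof.
move=> a_gt0; apply/funext => x; rewrite /= /projector A_h //.
have ainvA_gt0 : 0 < a^-1 * A x by rewrite mulr_gt0 ?invr_gt0.
rewrite -[h _ (h a x)]/((h _ \o h a) x) h_mul //.
by rewrite mulrAC mulVf ?mul1r ?lt0r_neq0.
Qed.

End representative_set.

Section pushforward_theory.
Context {d} {X : measurableType d} {R : realType}.
Context (mu : {measure set X -> \bar R}) {g : X -> X}.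
Hypothesis mg : measurable_fun [set: X] g.

Lemma pushforward_invariant (Phi Psi : X -> X) :
  Phi \o g = g \o Psi ->
  (forall S, measurable S -> mu (Psi @^-1` S) = mu S) ->
  forall S, measurable S -> pushforward mu g (Phi @^-1` S) = pushforward mu g S.
Proof.
move=> Phi_g mu_inv S mS; rewrite /pushforward -comp_preimage Phi_g comp_preimage.
exact/mu_inv/measurable_preimageT.
Qed.

Lemma ge0_integral_pushforward_scale (f : X -> R) (c : R) :
  0 <= c -> (forall x, 0 <= f x) -> measurable_fun [set: X] f ->
  (forall x, f (g x) = c * f x) ->
  forall D, measurable D ->
  (\int[pushforward mu g]_(x in D) (f x)%:E =
   c%:E * \int[mu]_(x in g @^-1` D) (f x)%:E)%E.
Proof.
move=> c_ge0 f_ge0 mf fg D mD.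
have mfE : measurable_fun [set: X] (EFin \o f) by exact/measurable_EFinP.
rewrite (ge0_integral_pushforward mg mu mD (measurable_funTS mfE)); last first.
  by move=> x _; rewrite lee_fin.
rewrite -ge0_integralZl_EFin //.
- by apply: eq_integral => x _ /=; rewrite fg.
- exact: measurable_preimageT.
- by move=> x _; rewrite lee_fin.
- exact: measurable_funTS.
Qed.

End pushforward_theory.

Lemma integral_gt0 d (T : measurableType d) (R : realType)
    (mu : {measure set T -> \bar R}) (f : T -> R) :
  (0 < mu [set: T])%E -> (forall x, 0 < f x) -> measurable_fun [set: T] f ->
  (0 < \int[mu]_x (f x)%:E)%E.
Proof.
move=> muT_gt0 f_gt0 mf.
rewrite lt0e integral_ge0 ?andbT; last by move=> x _; rewrite lee_fin ltW.
apply/negP => /eqP int_f0.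
have : ae_eq mu [set: T] (EFin \o f) (cst 0%E).
  apply/(ae_eq_integral_abs mu measurableT); first exact/measurable_EFinP.
  rewrite -[RHS]int_f0; apply: eq_integral => x _.
  by rewrite gee0_abs // lee_fin ltW.
case=> N [mN muN0 fN].
suff : (mu [set: T] <= mu N)%E by rewrite muN0 leNgt muT_gt0.
apply: le_measure; rewrite ?inE // => x _; apply: fN => /(_ I) [] /eqP.
by rewrite gt_eqF.
Qed.

Lemma normw_scale {d} {T : measurableType d} {R : realType}
    {rho rho' : {measure set T -> \bar R}} {B : T -> R} {c : R} {S : set T} :
  0 < c -> (\int[rho]_x (B x)%:E)%E \is a fin_num ->
  (\int[rho']_x (B x)%:E = c%:E * \int[rho]_x (B x)%:E)%E ->
  (\int[rho']_(x in S) (B x)%:E = c%:E * \int[rho]_(x in S) (B x)%:E)%E ->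
  normw rho' B S = normw rho B S.
Proof.
move=> c_gt0 int_fin int_c intS_c.
rewrite /normw int_c intS_c fineM // invfM EFinM muleACA -EFinM.
by rewrite mulfV ?lt0r_neq0 // mul1e.
Qed.

Theorem proposition2 (d : measure_display) (X : measurableType d) (R : realType)
  (mu : probability X R) (Phi : R -> X -> X) (h : R -> X -> X)
  (Y : set X) (A : X -> R)
  (Phi_bij : forall t, bijective (Phi t))
  (Phi_meas : forall t, measurable_fun [set: X] (Phi t))
  (Phi_joint : measurable_fun [set: X * R] (fun p : X * R => Phi p.2 p.1))
  (Phi_add : forall t1 t2, Phi t1 \o Phi t2 = Phi (t1 + t2))
  (mu_inv : forall t S, measurable S -> mu (Phi t @^-1` S) = mu S)
  (h_bij : forall a, 0 < a -> bijective (h a))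
  (h_meas : forall a, 0 < a -> measurable_fun [set: X] (h a))
  (h_mul : forall a1 a2, 0 < a1 -> 0 < a2 -> h a1 \o h a2 = h (a1 * a2))
  (h_Phi : forall t a, 0 < a -> Phi t \o h a = h a \o Phi (t / a))
  (A_pos : forall x, 0 < A x)
  (A_Y : forall x, Y (h (A x) x))
  (A_uniq : forall x a, 0 < a -> Y (h a x) -> a = A x)
  (A_meas : measurable_fun [set: X] A)
  (A_int : (\int[mu]_x (A x)%:E < +oo)%E)
  (P_meas : measurable_fun [set: X] (projector h A)) :
  forall (a : R) (a_pos : 0 < a),
    let mut := pushm mu (h_meas a a_pos) in
    (forall t S, measurable S -> mut (Phi t @^-1` S) = mut S) /\
    (0 < \int[mut]_x (A x)%:E < +oo)%E /\
    (forall S, measurable S ->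
       pushforward (normw mut A) (projector h A) S =
       pushforward (normw mu A) (projector h A) S).
Proof.
move=> a a_gt0 mut.
have Ah := A_h h_mul A_pos A_Y A_uniq a_gt0.
have P_h := projector_comp_h h_mul A_pos A_Y A_uniq a_gt0.
have ainv_gt0 : 0 < a^-1 by rewrite invr_gt0.
have int_mut := ge0_integral_pushforward_scale mu (h_meas a a_gt0) _ _
  (ltW ainv_gt0) (fun x => ltW (A_pos x)) A_meas Ah.
have int_mutT := int_mut _ measurableT; rewrite preimage_setT in int_mutT.
have int_gt0 : (0 < \int[mu]_x (A x)%:E)%E.
  by apply: integral_gt0 => //; rewrite [ltRHS](probability_setT mu).
have int_fin : (\int[mu]_x (A x)%:E)%E \is a fin_num.
  by rewrite ge0_fin_numE // ltW.
split; [|split].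
- move=> t.
  exact: pushforward_invariant _ (h_meas a a_gt0) _ _ (h_Phi t a a_gt0) (mu_inv _).
- rewrite int_mutT -(fineK int_fin) -EFinM lte_fin ltry andbT.
  by rewrite mulr_gt0 // fine_gt0 // int_gt0 A_int.
- move=> S mS; rewrite /pushforward; apply: (normw_scale ainv_gt0 int_fin int_mutT).
  rewrite int_mut; last exact: measurable_preimageT.
  by rewrite -comp_preimage P_h.
Qed.
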